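(* Assume $f$ has a unique global maximizer $g$ and the problem contains no weak epistasis. Let $v_0,v_1,\dots,v_{\ell-1}$ be an enumeration of $V$ in topological order of the epistatic graph, i.e. $\{v_j\}\not\Rightarrow v_i$ whenever $i<j$ (so the epistatic graph is acyclic). Then Partial Enumeration run on the partition $D=(\{v_0\},\{v_1\},\dots,\{v_{\ell-1}\})$, from any initial chromosome, ends with allele $g[v_i]$ at locus $v_i$ for every $i$; i.e. it returns the global optimum, using $2\ell$ fitness evaluations.
   Context: Fix $\ell\ge1$, loci $V=\{0,\dots,\ell-1\}$, chromosomes $\vec y\in\{0,1\}^V$, fitness $f:\{0,1\}^V\to\mathbb R$ (maximized) with unique global maximizer $g$. An assignment $A$ is a set of pairs $(v,a)$ ($v\in V$, $a\in\{0,1\}$) with at most one pair per locus; coverage $\mathcal C(A)$ is the set of loci in $A$; $\vec y^A$ denotes $\vec y$ with the alleles at loci of $\mathcal C(A)$ overwritten by $A$. $\Psi_A$ (constrained optima) is the set of chromosomes agreeing with $A$ on $\mathcal C(A)$ with maximum fitness among such chromosomes; $\Psi_A[v]=\{\psi_v:\psi\in\Psi_A\}$. Epistasis: for $v\in V$ and nonempty $S\subseteq V\setminus\{v\}$, $S\Rightarrow v$ iff for every $s\in S$ there exists an assignment $A$ with $\mathcal C(A)=S$ and $\Psi_A[v]\neq\Psi_{A\setminus\{(s,A[s])\}}[v]$ (where $A[s]$ is the allele of $A$ at $s$); the empty set is never epistatic. An epistasis $S\Rightarrow v$ with $|S|\ge2$ is weak if no nonempty proper subset $T\subsetneq S$ has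 $T\Rightarrow v$; ''no weak epistasis'' means no epistasis is weak. The epistatic graph is the directed graph on $V$ with edge $u\to v$ iff $\{u\}\Rightarrow v$. Partial Enumeration (PE) takes an ordered partition $D=(d_0,\dots,d_{m-1})$ of $V$, starts from an arbitrary (random) chromosome $\vec y$, and for $i=0,\dots,m-1$ in turn, for each of the $2^{|d_i|}$ assignments $A$ with $\mathcal C(A)=d_i$ (in any order), replaces $\vec y$ by $\vec y^A$ whenever $f(\vec y^A)>f(\vec y)$; it returns the final $\vec y$. *)

From mathcomp Require Import all_boot all_order all_algebra.
From mathcomp Require Import perm.
Set Implicit Arguments. Unset Strict Implicit. Unset Printing Implicit Defensive.
Import Order.TTheory GRing.Theory Num.Theory.
Local Open Scope ring_scope.

(* Loci V = 'I_l ; chromosomes y : V -> {0,1} (false = 0, true = 1). *)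
Definition chrom (l : nat) := {ffun 'I_l -> bool}.

(* An assignment: at most one allele per locus, i.e. a partial map V -> {0,1}. *)
Definition assign (l : nat) := {ffun 'I_l -> option bool}.

Section Defs.
Variables (R : realFieldType) (l : nat).
Implicit Types (f : chrom l -> R) (y g : chrom l) (A : assign l)
  (S T : {set 'I_l}) (v : 'I_l).

Definition coverage A : {set 'I_l} := [set v | A v != None].

Definition overwrite y A : chrom l :=
  [ffun v => if A v is Some a then a else y v].

Definition agrees A y : bool := [forall v, if A v is Some a then y v == a else true].

Definition Psi f A : {set chrom l} :=
  [set y | agrees A y && [forall z : chrom l, agrees A z ==> (f z <= f y)]].

Definition Psi_at f A v : {set bool} := [set (y : chrom l) v | y in Psi f A].

Definition remove_at A (s : 'I_l) : assign l :=
  [ffun v => if v == s then None else A v].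

Definition epistatic f S v : Prop :=
  S != set0 /\ v \notin S /\
  forall s, s \in S ->
    exists A : assign l, coverage A = S /\ Psi_at f A v != Psi_at f (remove_at A s) v.

Definition weak_epistasis f S v : Prop :=
  (2 <= #|S|)%N /\ epistatic f S v /\
  ~ (exists T, [/\ T != set0, T \proper S & epistatic f T v]).

Definition no_weak_epistasis f : Prop :=
  forall S v, ~ weak_epistasis f S v.

Definition unique_global_max f g : Prop :=
  forall y, y != g -> f y < f g.

Definition assigns_on (d : {set 'I_l}) : seq (assign l) :=
  [seq A <- enum {: assign l} | coverage A == d].

Definition pe_block f y (As : seq (assign l)) : chrom l :=
  foldl (fun y A => if f y < f (overwrite y A) then overwrite y A else y) y As.

(* Partial Enumeration: orders is the list of assignment orderings, one per block *)
Definition PE f (y0 : chrom l) (orders : seq (seq (assign l))) : chrom l :=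
  foldl (pe_block f) y0 orders.

(* orders is a valid choice of enumeration orders for the ordered partition D:
   for each block d_i, the i-th list enumerates each of the 2^|d_i| assignments
   with coverage d_i exactly once ("in any order") *)
Definition valid_orders (D : seq {set 'I_l}) (orders : seq (seq (assign l))) : bool :=
  all2 (fun As d => perm_eq As (assigns_on d)) orders D.

End Defs.

(* the partition ({v_0}, ..., {v_{l-1}}) for the enumeration i |-> sigma i *)
Definition singleton_partition (l : nat) (sigma : {perm 'I_l}) : seq {set 'I_l} :=
  [seq [set sigma i] | i <- enum 'I_l].

From mathcomp Require Import all_boot all_order all_algebra.
From mathcomp Require Import perm.
From Stdlib Require Import Classical.
Set Implicit Arguments. Unset Strict Implicit. Unset Printing Implicit Defensive.
Import Order.TTheory GRing.Theory Num.Theory.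
Local Open Scope ring_scope.

(* Without weak epistasis every epistasis S => v contains a single-locus
   epistasis {u} => v, so a locus v that no locus of C(A) acts on keeps its
   unconstrained optimal allele: Psi_A[v] = {g[v]} (induction on |C(A)|,
   removing one locus at a time).  When PE reaches the block {v_i}, the loci
   v_0, ..., v_(i-1) already carry their optimal alleles; constraining the
   later loci to their current alleles, the optimum under that constraint is
   the current chromosome with g[v_i] at v_i, and it is the only optimum
   there, so it strictly beats the flipped allele and PE picks g[v_i]. *)

Lemma all2_nth (S T : Type) (r : S -> T -> bool) (s : seq S) (t : seq T) x0 y0 :
  all2 r s t ->
  size s = size t /\ forall i, (i < size s)%N -> r (nth x0 s i) (nth y0 t i).
Proof.
elim: s t => [|x s IH] [|y t] //= /andP[rxy /IH[st rst]].
by rewrite st; split=> // -[|i] //; rewrite ltnS -st => /rst.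
Qed.

Lemma sumn_size_valid_orders l (D : seq {set 'I_l})
    (orders : seq (seq (assign l))) :
  valid_orders D orders ->
  sumn [seq size As | As <- orders] = sumn [seq size (assigns_on d) | d <- D].
Proof.
elim: orders D => [|As os IH] [|d D] //= /andP[HAs /IH ->].
by rewrite (perm_size HAs).
Qed.

Section Assignments.
Variable l : nat.
Implicit Types (y z : chrom l) (A : assign l) (L : {set 'I_l}) (u v : 'I_l).

Definition assign1 u (a : bool) : assign l :=
  [ffun v => if v == u then Some a else None].

Definition restrict y L : assign l :=
  [ffun v => if v \in L then Some (y v) else None].

Definition set_allele y u a : chrom l := overwrite y (assign1 u a).

Lemma coverage_remove_at A s : coverage (remove_at A s) = coverage A :\ s.
Proof. by apply/setP => v; rewrite !inE ffunE; case: (v == s). Qed.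

Lemma coverage_restrict y L : coverage (restrict y L) = L.
Proof. by apply/setP => v; rewrite inE ffunE; case: (v \in L). Qed.

Lemma agrees_restrictP y L z :
  reflect {in L, forall v, z v = y v} (agrees (restrict y L) z).
Proof.
apply: (iffP forallP) => [H v vL | H v]; last first.
  by rewrite ffunE; case: ifP => // /H ->.
by have := H v; rewrite ffunE vL => /eqP.
Qed.

Lemma assign1_inj u : injective (assign1 u).
Proof. by move=> a b /ffunP /(_ u); rewrite !ffunE eqxx => -[]. Qed.

Lemma set_alleleE y u a v : set_allele y u a v = if v == u then a else y v.
Proof. by rewrite !ffunE; case: (v == u). Qed.

Lemma set_allele_id y u : set_allele y u (y u) = y.
Proof. by apply/ffunP => v; rewrite set_alleleE; case: eqP => [->|]. Qed.

Lemma overwrite_set_allele y u a b :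
  overwrite (set_allele y u a) (assign1 u b) = set_allele y u b.
Proof. by apply/ffunP => v; rewrite !ffunE; case: (v == u). Qed.

Lemma assigns_on_set1 u :
  perm_eq (assigns_on [set u]) [:: assign1 u true; assign1 u false].
Proof.
apply: uniq_perm; first by rewrite filter_uniq // enum_uniq.
  by rewrite /= inE andbT; apply/negP => /eqP /assign1_inj.
move=> A; rewrite mem_filter mem_enum andbT !inE.
apply/eqP/idP => [covA|]; last first.
  by case/orP => /eqP ->; apply/setP => v; rewrite !inE ffunE; case: (v == u).
have Acov v : (A v != None) = (v == u).
  by have := f_equal (fun S : {set 'I_l} => v \in S) covA; rewrite !inE.
have := Acov u; rewrite eqxx; case Au: (A u) => [a|] // _.
suff -> : A = assign1 u a by case: a {Au}; rewrite eqxx ?orbT.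
apply/ffunP => v; rewrite ffunE; case: (eqVneq v u) => [->|vu] //.
by have := Acov v; rewrite (negbTE vu); case: (A v).
Qed.

Lemma perm_assigns_on_set1 u (As : seq (assign l)) b :
  perm_eq As (assigns_on [set u]) ->
  exists2 ds, As = [seq assign1 u d | d <- ds] & b \in ds.
Proof.
move=> /perm_trans /(_ (assigns_on_set1 u)) /perm_mem memAs.
exists [seq odflt b (A u) | A <- As].
  rewrite -map_comp map_id_in // => A.
  by rewrite memAs !inE => /orP[] /eqP -> /=; rewrite ffunE eqxx.
apply/mapP; exists (assign1 u b); last by rewrite ffunE eqxx.
by rewrite memAs !inE; case: b; rewrite eqxx ?orbT.
Qed.

End Assignments.

Section SingleLocusBlock.
Variables (R : realFieldType) (l : nat) (f : chrom l -> R).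

Lemma better_allele (F : bool -> R) b c d : F (~~ b) < F b ->
  (if F c < F d then d else c) = (if d == b then b else c).
Proof. by case: b c d => -[] [] //= Fb; rewrite ?ltxx ?Fb ?(lt_gtF Fb). Qed.

Lemma pe_block_assign1 y u b c ds :
  f (set_allele y u (~~ b)) < f (set_allele y u b) ->
  pe_block f (set_allele y u c) [seq assign1 u d | d <- ds] =
  set_allele y u (if b \in ds then b else c).
Proof.
move=> fb; elim: ds c => [|d ds IH] c //.
rewrite map_cons [LHS]/pe_block /= -/(pe_block f _ _) overwrite_set_allele -fun_if.
rewrite (@better_allele (fun a => f (set_allele y u a)) _ _ _ fb) IH in_cons.
by rewrite [b == d]eq_sym; case: (b \in ds); case: (d == b).
Qed.

Lemma pe_block_set1 y u b (As : seq (assign l)) :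
  perm_eq As (assigns_on [set u]) ->
  f (set_allele y u (~~ b)) < f (set_allele y u b) ->
  pe_block f y As = set_allele y u b.
Proof.
move=> /(perm_assigns_on_set1 b) [ds -> bds] fb.
by rewrite -{1}(set_allele_id y u) (pe_block_assign1 _ _ fb) bds.
Qed.

End SingleLocusBlock.

Section ConstrainedOptima.
Variables (R : realFieldType) (l : nat) (f : chrom l -> R) (g : chrom l).
Hypothesis g_max : unique_global_max f g.
Hypothesis no_weak : no_weak_epistasis f.

Lemma Psi_coverage0 A : coverage A = set0 -> Psi f A = [set g].
Proof.
move=> covA; have agA z : agrees A z.
  apply/forallP => v; case Av: (A v) => //.
  by have := in_set0 v; rewrite -covA inE Av.
apply/setP => y; rewrite !inE agA /=.
case: (eqVneq y g) => [->|yg].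
  apply/forallP => z; apply/implyP => _.
  by case: (eqVneq z g) => [->//|zg]; exact/ltW/g_max.
apply/negbTE/negP => /forallP /(_ g) /implyP /(_ (agA g)).
by rewrite leNgt g_max.
Qed.

Lemma epistatic_set1 S v :
  epistatic f S v -> exists2 u, u \in S & epistatic f [set u] v.
Proof.
move: {2}#|S| (leqnn #|S|) => n; elim: n S => [|n IH] S Sn eSv.
  by case: eSv; rewrite -cards_eq0 -leqn0 Sn.
case: (leqP #|S| 1) => [S1|S2].
  have /cards1P[u Su] : #|S| == 1%N.
    by rewrite eqn_leq S1 card_gt0; case: eSv.
  by exists u; [rewrite Su set11 | rewrite -Su].
have [T [_ TS eTv]] : exists T, [/\ T != set0, T \proper S & epistatic f T v].
  exact: NNPP (fun nT => no_weak (conj S2 (conj eSv nT))).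
have [|u uT euv] := IH T _ eTv; first by rewrite -ltnS (leq_trans (proper_card TS)).
by exists u; rewrite ?(subsetP (proper_sub TS)).
Qed.

Lemma Psi_at_free A v :
  v \notin coverage A -> {in coverage A, forall u, ~ epistatic f [set u] v} ->
  Psi_at f A v = [set g v].
Proof.
move: {2}#|coverage A| (erefl #|coverage A|) => n.
elim: n A => [|n IH] A covn vA free.
  move/eqP: covn; rewrite cards_eq0 => /eqP/Psi_coverage0 PsiA.
  by rewrite /Psi_at PsiA imset_set1.
apply/eqP; apply: contraT => PsiA.
have [|u uA /(free u uA)//] := @epistatic_set1 (coverage A) v.
split; first by rewrite -card_gt0 covn.
split=> // s sA; exists A; split=> //.
have covAs : #|coverage (remove_at A s)| = n.
  by move: covn; rewrite coverage_remove_at (cardsD1 s) sA add1n => -[].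
rewrite (IH (remove_at A s)) // coverage_remove_at.
- by rewrite in_setD1 negb_and vA orbT.
- by move=> u /setD1P[_ /free].
Qed.

Section Restriction.
Variables (L : {set 'I_l}) (y : chrom l).
Hypothesis L_free : forall w, w \notin L -> {in L, forall x, ~ epistatic f [set x] w}.

Lemma Psi_restrict z : z \in Psi f (restrict y L) -> z = overwrite g (restrict y L).
Proof.
move=> zPsi; apply/ffunP => v; rewrite ffunE.
move: (zPsi); rewrite inE => /andP[/agrees_restrictP zy _]; rewrite ffunE.
case: ifP => [/zy //| vL].
have : z v \in Psi_at f (restrict y L) v by apply/imsetP; exists z.
rewrite Psi_at_free ?coverage_restrict ?vL //; first by rewrite inE => /eqP.
exact: L_free (negbT vL).
Qed.

(* The constrained optimum is the current chromosome with g[u] at u, and the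
   flipped chromosome is a feasible non-optimum. *)
Lemma set_allele_opt_gt u :
  u \notin L -> (forall w, w \notin L -> w != u -> y w = g w) ->
  f (set_allele y u (~~ g u)) < f (set_allele y u (g u)).
Proof.
move=> uL yg; set A := restrict y L.
have opt : set_allele y u (g u) = overwrite g A.
  apply/ffunP => v; rewrite set_alleleE !ffunE.
  case: (eqVneq v u) => [->|vu]; first by rewrite (negbTE uL).
  by case: ifP => // /negbT vL; exact: yg.
have [z zPsi] : exists z, z \in Psi f A.
  have : g u \in Psi_at f A u.
    by rewrite Psi_at_free ?set11 ?coverage_restrict //; exact: L_free.
  by case/imsetP=> z zPsi _; exists z.
move: (zPsi); rewrite inE (Psi_restrict zPsi) -opt => /andP[_ /forallP optA].
have flipA : agrees A (set_allele y u (~~ g u)).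
  apply/agrees_restrictP => v vL; rewrite set_alleleE.
  by case: eqP => // vu; move: uL; rewrite -vu vL.
rewrite lt_def (implyP (optA _) flipA) andbT; apply/eqP => eqf.
have : set_allele y u (~~ g u) \in Psi f A.
  by rewrite inE flipA; apply/forallP => z'; rewrite -eqf; exact: optA.
move/Psi_restrict/ffunP/(_ u); rewrite -opt !set_alleleE eqxx.
by case: (g u).
Qed.

End Restriction.
End ConstrainedOptima.

Section TopologicalOrder.
Variables (R : realFieldType) (l : nat) (f : chrom l -> R) (g : chrom l).
Variable sigma : {perm 'I_l}.
Hypothesis g_max : unique_global_max f g.
Hypothesis no_weak : no_weak_epistasis f.
Hypothesis topo : forall i j : 'I_l, (i < j)%N -> ~ epistatic f [set sigma j] (sigma i).

Definition later (i : 'I_l) : {set 'I_l} := [set v | (i < (sigma^-1)%g v)%N].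

Lemma later_free i w :
  w \notin later i -> {in later i, forall x, ~ epistatic f [set x] w}.
Proof.
rewrite inE -leqNgt => wi x; rewrite inE => ix.
by rewrite -(permKV sigma w) -(permKV sigma x); apply: topo; exact: leq_ltn_trans ix.
Qed.

Lemma PE_take_opt y0 orders :
  valid_orders (singleton_partition sigma) orders ->
  forall k, (k <= l)%N ->
  forall j : 'I_l, (j < k)%N -> PE f y0 (take k orders) (sigma j) = g (sigma j).
Proof.
move=> /(all2_nth [::] set0) [sz blocks].
rewrite size_map size_enum_ord in sz.
elim=> [|k IH] // kl; set y := PE f y0 (take k orders).
pose i := Ordinal kl.
have y_opt (j : 'I_l) : (j < i)%N -> y (sigma j) = g (sigma j) by exact: IH (ltnW kl) j.
have block : perm_eq (nth [::] orders i) (assigns_on [set sigma i]).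
  by have := blocks i; rewrite sz ltn_ord (nth_map i) ?size_enum_ord // nth_ord_enum; apply.
rewrite (take_nth [::]) ?sz // /PE foldl_rcons -/y (@pe_block_set1 _ _ _ _ _ (g (sigma i)) _ block); last first.
  apply: (set_allele_opt_gt g_max no_weak (@later_free i)).
    by rewrite inE permK ltnn.
  move=> w; rewrite inE -leqNgt leq_eqVlt => /orP[/eqP wi | wi] wsi.
    by move/val_inj: wi wsi => <-; rewrite permKV eqxx.
  by rewrite -(permKV sigma w) y_opt.
move=> j; rewrite ltnS leq_eqVlt set_alleleE => /orP[/eqP ji | ji].
  by rewrite (_ : j = i) ?eqxx //; exact: val_inj.
by rewrite (inj_eq perm_inj) -val_eqE /= (ltn_eqF ji) y_opt.
Qed.

End TopologicalOrder.

Theorem theorem2 (R : realFieldType) (l : nat) (f : chrom l -> R) (g : chrom l) :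
  (0 < l)%N ->
  unique_global_max f g ->
  no_weak_epistasis f ->
  forall sigma : {perm 'I_l},
    (forall i j : 'I_l, (i < j)%N -> ~ epistatic f [set sigma j] (sigma i)) ->
  forall (y0 : chrom l) (orders : seq (seq (assign l))),
    valid_orders (singleton_partition sigma) orders ->
    (forall i : 'I_l, PE f y0 orders (sigma i) = g (sigma i)) /\
    sumn [seq size As | As <- orders] = (2 * l)%N.
Proof.
move=> _ g_max no_weak sigma topo y0 orders valid; split=> [i|].
  have [sz _] := all2_nth [::] set0 valid.
  rewrite size_map size_enum_ord in sz.
  have := PE_take_opt g_max no_weak topo y0 valid (leqnn l) (ltn_ord i).
  by rewrite take_oversize ?sz.
rewrite (sumn_size_valid_orders valid) -map_comp -[X in (2 * X)%N](size_enum_ord l).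
elim: (enum 'I_l) => //= i s ->.
by rewrite (perm_size (assigns_on_set1 _)) mulnS.
Qed.
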